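(* Let $\Omega\subset\mathbb{R}^d$ be a bounded domain and $\mathcal{S}=\{(a_1,a_2,a_3)\in\mathbb{R}^3: a_i\ge0,\ a_1a_2a_3=0\}$. For $\mathbf v=(v_1,v_2,v_3)\in L^2(\Omega)^3$ define $\mathcal{P}\mathbf v$ pointwise by: at $x\in\Omega$, let $k^*(x)$ be the index $k\in\{1,2,3\}$ minimizing $(v_k(x))^+=\max\{v_k(x),0\}$, ties broken by choosing the smallest index, and set $(\mathcal P\mathbf v)_i(x)=(v_i(x))^+$ if $i\ne k^*(x)$ and $(\mathcal P\mathbf v)_{k^*(x)}(x)=0$. Then $\mathcal P\mathbf v\in L^2(\Omega)^3$, $\mathcal P\mathbf v(x)\in\mathcal S$ for a.e. $x\in\Omega$, and $$\|\mathbf v-\mathcal P\mathbf v\|_{L^2(\Omega)^3}^2=\min\big\{\|\mathbf v-\mathbf w\|_{L^2(\Omega)^3}^2:\ \mathbf w\in L^2(\Omega)^3,\ \mathbf w(x)\in\mathcal S\text{ a.e.}\big\}.$$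
   Context: $\|\mathbf v\|_{L^2(\Omega)^3}^2=\int_\Omega\sum_{i=1}^3|v_i(x)|^2\,dx$. *)

From HB Require Import structures.
From mathcomp Require Import all_boot all_order all_algebra.
From mathcomp Require Import all_classical all_reals all_analysis.
Set Implicit Arguments. Unset Strict Implicit. Unset Printing Implicit Defensive.
Import Order.TTheory GRing.Theory Num.Theory.
Import numFieldNormedType.Exports.
Local Open Scope classical_set_scope.
Local Open Scope ring_scope.

(* Points of R^d are represented as d-tuples (these carry the product
   sigma-algebra of the library); for topological notions we transport them
   to row vectors 'rV[R]_d, which carry the usual normed topology. *)
Definition tup2rv {R : realType} {d : nat} (t : d.-tuple R) : 'rV[R]_d :=
  \row_i tnth t i.

Definition bounded_domain (R : realType) (d : nat) (Omega : set (d.-tuple R)) :=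
  [/\ Omega !=set0, open (tup2rv @` Omega), connected (tup2rv @` Omega)
    & bounded_set (tup2rv @` Omega)].

(* mu is Lebesgue measure on R^d: it gives every closed box its volume
   (this characterizes Lebesgue measure on the product sigma-algebra). *)
Definition is_lebesgue_measure (R : realType) (d : nat)
    (mu : set (d.-tuple R) -> \bar R) :=
  forall a b : d.-tuple R, (forall i, tnth a i <= tnth b i) ->
    mu [set t | forall i, tnth a i <= tnth t i <= tnth b i] =
    (\prod_(i < d) (tnth b i - tnth a i))%:E.

Definition inS (R : realType) (a : 'I_3 -> R) : Prop :=
  (forall i, 0 <= a i) /\ \prod_(i < 3) a i = 0.

Definition L2fun (R : realType) (d : nat) (mu : set (d.-tuple R) -> \bar R)
    (Omega : set (d.-tuple R)) (f : d.-tuple R -> R) : Prop :=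
  measurable_fun Omega f /\
  (\int[mu]_(x in Omega) ((f x) ^+ 2)%:E < +oo)%E.

Definition dist2 (R : realType) (d : nat) (mu : set (d.-tuple R) -> \bar R)
    (Omega : set (d.-tuple R)) (v w : 'I_3 -> d.-tuple R -> R) : \bar R :=
  \int[mu]_(x in Omega) (\sum_(i < 3) (v i x - w i x) ^+ 2)%:E.

Definition k1 : 'I_3 := @Ordinal 3 1 isT.
Definition k2 : 'I_3 := @Ordinal 3 2 isT.

Definition kstar (R : realType) (d : nat) (v : 'I_3 -> d.-tuple R -> R)
    (x : d.-tuple R) : 'I_3 :=
  let p := fun k => Num.max (v k x) 0 in
  if (p ord0 <= p k1) && (p ord0 <= p k2) then ord0
  else if p k1 <= p k2 then k1 else k2.

Definition Pproj (R : realType) (d : nat) (v : 'I_3 -> d.-tuple R -> R) :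
    'I_3 -> d.-tuple R -> R :=
  fun i x => if i == kstar v x then 0 else Num.max (v i x) 0.

From HB Require Import structures.
From mathcomp Require Import all_boot all_order all_algebra.
From mathcomp Require Import all_classical all_reals all_analysis.
From mathcomp Require Import measurable_realfun ring lra.
Set Implicit Arguments. Unset Strict Implicit. Unset Printing Implicit Defensive.
Import Order.TTheory GRing.Theory Num.Theory.
Import HBNNSimple.
Local Open Scope classical_set_scope.
Local Open Scope ring_scope.

(* Everything happens pointwise.  Splitting y^2 = (y - y^+)^2 + (y^+)^2, any
   w in S with w_j = 0 satisfies |a - w|^2 >= sum_i (a_i - a_i^+)^2 + (a_j^+)^2,
   while |a - P a|^2 = sum_i (a_i - a_i^+)^2 + (a_k*^+)^2 and a_k*^+ <= a_j^+.
   Integrating this inequality, which holds off a null set, gives minimality;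
   P v is measurable because k* is decided by finitely many comparisons, and
   square integrable because |(P v)_i| <= |v_i|. *)

Section pos_part_projection.
Variable R : realType.

Lemma sqr_max0_split (y : R) :
  y ^+ 2 = (y - Num.max y 0) ^+ 2 + Num.max y 0 ^+ 2.
Proof. by rewrite maxEle; case: ifP => _; ring. Qed.

Lemma ler_sqr_sub_max0 (y w : R) : 0 <= w ->
  (y - Num.max y 0) ^+ 2 <= (y - w) ^+ 2.
Proof.
move=> w_ge0; rewrite maxEle; case: ifP => y_le0.
  by rewrite subr0; nra.
by rewrite subrr expr0n sqr_ge0.
Qed.

Lemma sum_sqr_zero_argmin_le (I : finType) (a w : I -> R) (k j : I) :
  (forall i, Num.max (a k) 0 <= Num.max (a i) 0) ->
  (forall i, 0 <= w i) -> w j = 0 ->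
  \sum_i (a i - (if i == k then 0 else Num.max (a i) 0)) ^+ 2
  <= \sum_i (a i - w i) ^+ 2.
Proof.
move=> k_min w_ge0 wj0; pose p i := Num.max (a i) 0.
have lhsE i : (a i - (if i == k then 0 else p i)) ^+ 2 =
    (a i - p i) ^+ 2 + (if i == k then p i ^+ 2 else 0).
  by case: eqP => _; rewrite ?subr0 ?addr0 // -sqr_max0_split.
have rhs_ge i : (a i - p i) ^+ 2 + (if i == j then p i ^+ 2 else 0)
    <= (a i - w i) ^+ 2.
  case: eqP => [->|_]; first by rewrite wj0 subr0 -sqr_max0_split.
  by rewrite addr0 ler_sqr_sub_max0.
rewrite (eq_bigr _ (fun i _ => lhsE i)) big_split /=.
apply: le_trans (ler_sum _ (fun i _ => rhs_ge i)).
rewrite big_split /= lerD2l -!big_mkcond /= !big_pred1_eq.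
have pk_ge0 : 0 <= p k by rewrite /p le_max lexx orbT.
have := k_min j; rewrite -/(p k) -/(p j); nra.
Qed.

End pos_part_projection.

(* No measurability of D, f or g is needed: a nonnegative integral is the
   supremum of the integrals of the simple functions below the integrand, and
   such a simple function may be cut down to the complement of the null set. *)
Lemma ae_ge0_le_integral_nonmeas d (T : measurableType d) (R : realType)
    (mu : {measure set T -> \bar R}) (D : set T) (f g : T -> \bar R) :
  (forall x, D x -> (0 <= f x)%E) -> (forall x, D x -> (0 <= g x)%E) ->
  {ae mu, forall x, D x -> (f x <= g x)%E} ->
  (\int[mu]_(x in D) f x <= \int[mu]_(x in D) g x)%E.
Proof.
move=> f_ge0 g_ge0 [N [mN muN fgN]].
rewrite (ge0_integralE _ f_ge0) (ge0_integralE _ g_ge0).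
apply: ge_ereal_sup => _ [h /= h_le_f <-].
have mCN : measurable (~` N) by exact: measurableC.
apply: ereal_sup_ubound; exists (proj_nnsfun h mCN) => /=.
  move=> x; rewrite /patch mindicE.
  case: (boolP (x \in ~` N)) => xN; rewrite ?mulr1 ?mulr0.
    have := h_le_f x; rewrite /patch; case: ifP => // Dx /le_trans; apply.
    rewrite inE in Dx.
    by apply: contrapT => fg; apply: (set_mem xN); apply: fgN => /(_ Dx).
  by case: ifP => // Dx; rewrite inE in Dx; exact: g_ge0.
have -> : sintegral mu h = (\int[mu]_(x in setT) (h x)%:E)%E.
  by rewrite integral_nnsfun // patch_setT.
rewrite -mrestrict -integral_nnsfun //.
rewrite [RHS](ge0_negligible_integral _ _ _ _ muN) ?setTD //.
- exact/measurable_EFinP/measurable_funPT.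
- by move=> x _; rewrite lee_fin.
Qed.

Lemma measurable_fun_ifD d1 d2 (T1 : measurableType d1) (T2 : measurableType d2)
    (D : set T1) (c : T1 -> bool) (f g : T1 -> T2) :
  measurable_fun D c -> measurable_fun D f -> measurable_fun D g ->
  measurable_fun D (fun x => if c x then f x else g x).
Proof.
move=> mc mf mg mD; move: (mD); apply: measurable_fun_if => //.
- exact: measurable_funS mf.
- exact: measurable_funS mg.
Qed.

Lemma ord3_cases (j : 'I_3) : [\/ j = ord0, j = k1 | j = k2].
Proof.
by case: j => [[|[|[|//]]] j_lt3]; [constructor 1|constructor 2|constructor 3];
  apply/val_inj.
Qed.

Section kstar_projection.
Variables (R : realType) (d : nat) (v : 'I_3 -> d.-tuple R -> R).

Lemma kstar_min x j : Num.max (v (kstar v x) x) 0 <= Num.max (v j x) 0.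
Proof.
rewrite /kstar; case: (ord3_cases j) => ->; case: ifP => [/andP[]|/nandP[]];
  rewrite -?ltNge; try case: ifP; lra.
Qed.

Lemma Pproj_inS x : inS (fun i => Pproj v i x).
Proof.
split=> [i|].
  by rewrite /Pproj; case: ifP => // _; rewrite le_max lexx orbT.
by apply/eqP/prodf_eq0; exists (kstar v x) => //; rewrite /Pproj eqxx.
Qed.

Lemma sqr_Pproj_le i x : Pproj v i x ^+ 2 <= v i x ^+ 2.
Proof.
rewrite /Pproj; case: ifP => _; first by rewrite expr0n sqr_ge0.
by rewrite maxEle; case: ifP => // _; rewrite expr0n sqr_ge0.
Qed.

Lemma measurable_Pproj (D : set (d.-tuple R)) i :
  (forall k, measurable_fun D (v k)) -> measurable_fun D (Pproj v i).
Proof.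
move=> mv; pose p k x := Num.max (v k x) 0.
have mp k : measurable_fun D (p k) by apply: measurable_maxr.
pose c0 x := (p ord0 x <= p k1 x) && (p ord0 x <= p k2 x).
pose c1 x := p k1 x <= p k2 x.
have -> : Pproj v i = fun x => if c0 x then (if i == ord0 then 0 else p i x)
    else if c1 x then (if i == k1 then 0 else p i x)
    else (if i == k2 then 0 else p i x).
  apply/funext => x; rewrite /Pproj /kstar -/(c0 x) -/(c1 x).
  by case: (c0 x); case: (c1 x).
have mif (k : 'I_3) : measurable_fun D (fun x => if i == k then 0 else p i x).
  by case: (i == k).
have mc0 : measurable_fun D c0.
  by apply: measurable_and; apply: measurable_fun_ler.
have mc1 : measurable_fun D c1 by apply: measurable_fun_ler.
apply: measurable_fun_ifD mc0 (mif _) _.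
exact: measurable_fun_ifD mc1 (mif _) (mif _).
Qed.

End kstar_projection.

Theorem lemma3p13 (R : realType) (d : nat)
  (mu : {measure set (d.-tuple R) -> \bar R}) (Omega : set (d.-tuple R))
  (v : 'I_3 -> d.-tuple R -> R) :
  is_lebesgue_measure mu ->
  bounded_domain Omega ->
  (forall i, L2fun mu Omega (v i)) ->
  [/\ (forall i, L2fun mu Omega (Pproj v i)),
      {ae mu, forall x, Omega x -> inS (fun i => Pproj v i x)} &
      forall w : 'I_3 -> d.-tuple R -> R,
        (forall i, L2fun mu Omega (w i)) ->
        {ae mu, forall x, Omega x -> inS (fun i => w i x)} ->
        (dist2 mu Omega v (Pproj v) <= dist2 mu Omega v w)%E].
Proof.
(* The measure need not be Lebesgue measure, nor Omega a bounded domain. *)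
move=> _ _ v_L2.
have sum_sqr_ge0 (a b : 'I_3 -> R) : (0 <= (\sum_i (a i - b i) ^+ 2)%:E)%E.
  by rewrite lee_fin sumr_ge0 // => i _; rewrite sqr_ge0.
split.
- move=> i; split; first by apply: measurable_Pproj => k; exact: (v_L2 k).1.
  apply: le_lt_trans (v_L2 i).2; apply: ae_ge0_le_integral_nonmeas.
  + by move=> x _; rewrite lee_fin sqr_ge0.
  + by move=> x _; rewrite lee_fin sqr_ge0.
  + by apply: aeW => x _; rewrite lee_fin sqr_Pproj_le.
- by apply: aeW => x _; exact: Pproj_inS.
- move=> w _ w_inS.
  apply: ae_ge0_le_integral_nonmeas => [x _|x _|]; [exact: sum_sqr_ge0..|].
  apply: filterS w_inS => x w_inS Ox.
  have [w_ge0 /eqP/prodf_eq0 [j _ /eqP wj0]] := w_inS Ox.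
  by rewrite lee_fin (sum_sqr_zero_argmin_le (kstar_min v x) w_ge0 wj0).
Qed.
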